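(* Let $\mathcal{M}=(M,\mathcal{C})$ be a transitive $\beta$-model of MK$^*$. Let $N_1,N_2\in\mathcal{C}$ and let $R_1,R_2\in\mathcal{C}$ be well-founded binary relations such that $(N_1,R_1)$ and $(N_2,R_2)$ are coding pairs. If there is an isomorphism between $(N_1,R_1)$ and $(N_2,R_2)$, then there is such an isomorphism in $\mathcal{C}$.
   Context: MK$^*$ is Morse–Kelley class theory (two-sorted models $(M,\mathcal{C})$, $M$ a transitive ZFC model, $\mathcal{C}\subseteq\mathcal{P}(M)$, with set axioms, class Foundation and Extensionality, Replacement for class functions, Class Comprehension for all two-sorted formulas, Global Choice) plus Class-Bounding $\forall x\,\exists A\,\varphi(x,A)\to\exists B\,\forall x\,\exists y\,\varphi(x,(B)_y)$ with $(B)_y=\{z:(y,z)\in B\}$. A $\beta$-model: a class is well-founded in the model iff truly well-founded. A coding pair is $(M_0,R)$ with $M_0\in\mathcal{C}$ having a distinguished element $a$ and $R\in\mathcal{C}$ a binary relation on $M_0$ such that: each $z\in M_0$ has a unique $R$-distance $n$ from $a$ (an $R$-chain $zRz_{n-1}R\cdots Rz_1Ra$); if $y\neq z$, $yRx$, $zRx$ then $(M_0,R)\restriction y\not\cong(M_0,R)\restriction z$ (restriction = the element with everything $R$-chain-connected below it); if $y\neq z$ have equal $R$-distance from $a$ then $vRy\to\neg vRz$; $R$ is well-founded. An isomorphism of coding pairs is an isomorphism of the structures $(N_1,R_1)\cong(N_2,R_2)$. *)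

(* Models of MK* are represented as follows:
   - the transitive ZFC model M is represented (up to Mostowski collapse) by a
     type M with a well-founded, extensional membership relation [mem];
   - the collection of classes C ⊆ P(M) is a predicate on predicates M -> Prop;
   - ordered pairs are Kuratowski pairs computed inside M. *)
From Stdlib Require Import Classical.

Definition scons {A : Type} (x : A) (e : nat -> A) : nat -> A :=
  fun n => match n with 0 => x | S k => e k end.

(* Two-sorted formulas of class theory, de Bruijn indices for set variables
   and (separately) for class variables. *)
Inductive form : Type :=
| FMem (i j : nat)
| FEq (i j : nat)
| FIn (i j : nat)        (* set_i ∈ class_j *)
| FNot (p : form)
| FAnd (p q : form)
| FAllS (p : form)
| FAllC (p : form).

Fixpoint first_order (p : form) : bool :=
  match p with
  | FMem _ _ | FEq _ _ => true
  | FIn _ _ => false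
  | FNot q => first_order q
  | FAnd q r => first_order q && first_order r
  | FAllS q => first_order q
  | FAllC _ => false
  end.

Section MK.
Variable M : Type.
Variable mem : M -> M -> Prop.
Variable C : (M -> Prop) -> Prop.

Fixpoint sat (es : nat -> M) (ec : nat -> M -> Prop) (p : form) : Prop :=
  match p with
  | FMem i j => mem (es i) (es j)
  | FEq i j => es i = es j
  | FIn i j => ec j (es i)
  | FNot q => ~ sat es ec q
  | FAnd q r => sat es ec q /\ sat es ec r
  | FAllS q => forall x : M, sat (scons x es) ec q
  | FAllC q => forall A : M -> Prop, C A -> sat es (scons A ec) q
  end.

(* p is the Kuratowski pair (x,y) = {{x},{x,y}} in M *)
Definition is_pair (x y p : M) : Prop :=
  forall w, mem w p <->
    ((forall u, mem u w <-> u = x) \/ (forall u, mem u w <-> (u = x \/ u = y))).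

Definition crel (R : M -> Prop) (x y : M) : Prop :=
  exists p, is_pair x y p /\ R p.

Definition slice (B : M -> Prop) (y : M) : M -> Prop := fun z => crel B y z.

Definition zfc_model : Prop :=
  well_founded mem /\
  (forall x y, (forall z, mem z x <-> mem z y) -> x = y) /\
  (forall a b, exists c, mem a c /\ mem b c) /\
  (forall x, exists u, forall z w, mem z w -> mem w x -> mem z u) /\
  (forall x, exists q, forall z, (forall u, mem u z -> mem u x) -> mem z q) /\
  (exists w, (exists e, mem e w /\ forall u, ~ mem u e) /\
     forall x, mem x w -> exists s, mem s w /\ forall u, mem u s <-> (mem u x \/ u = x)) /\
  (forall p es ec, first_order p = true -> forall a, exists b, forall z,
     mem z b <-> (mem z a /\ sat (scons z es) ec p)) /\
  (* replacement scheme: y is variable 0, x is variable 1 *)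
  (forall p es ec, first_order p = true -> forall a,
     (forall x, mem x a -> exists! y, sat (scons y (scons x es)) ec p) ->
     exists b, forall y, mem y b <-> exists x, mem x a /\ sat (scons y (scons x es)) ec p) /\
  (forall x, (forall y, mem y x -> exists u, mem u y) ->
     (forall y y' u, mem y x -> mem y' x -> mem u y -> mem u y' -> y = y') ->
     exists s, forall y, mem y x -> exists! u, mem u s /\ mem u y).

Definition mkstar_model : Prop :=
  zfc_model /\
  (forall A, C A -> (exists x, A x) -> exists x, A x /\ forall y, A y -> ~ mem y x) /\
  (forall A, C A -> forall a, exists b, forall z, mem z b <-> (mem z a /\ A z)) /\
  (forall F, C F -> (forall x y y', crel F x y -> crel F x y' -> y = y') ->
     forall a, exists b, forall y, mem y b <-> exists x, mem x a /\ crel F x y) /\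
  (forall p es ec, (forall i, C (ec i)) ->
     C (fun x => sat (scons x es) ec p)) /\
  (exists G, C G /\ (forall x y y', crel G x y -> crel G x y' -> y = y') /\
     forall x, (exists u, mem u x) -> exists y, crel G x y /\ mem y x) /\
  (* class bounding: x is set variable 0, A is class variable 0 *)
  (forall p es ec, (forall i, C (ec i)) ->
     (forall x, exists A, C A /\ sat (scons x es) (scons A ec) p) ->
     exists B, C B /\ forall x, exists y, sat (scons x es) (scons (slice B y) ec) p).

(* well-foundedness of a relation (given as a binary predicate) in the real world *)
Definition truly_wf (S : M -> M -> Prop) : Prop :=
  forall X : M -> Prop, (exists x, X x) -> exists x, X x /\ forall y, X y -> ~ S y x.

(* well-foundedness as evaluated inside the model: only classes in C are tested *)
Definition model_wf (S : M -> M -> Prop) : Prop :=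
  forall X : M -> Prop, C X -> (exists x, X x) -> exists x, X x /\ forall y, X y -> ~ S y x.

Definition beta_model : Prop :=
  forall R, C R -> (model_wf (crel R) <-> truly_wf (crel R)).

Inductive Rdist (Q : M -> M -> Prop) (a : M) : M -> nat -> Prop :=
| Rdist0 : Rdist Q a a 0
| RdistS : forall z w n, Q z w -> Rdist Q a w n -> Rdist Q a z (S n).

Inductive below (S : M -> M -> Prop) (y : M) : M -> Prop :=
| below0 : below S y y
| belowS : forall w v, S w v -> below S y v -> below S y w.

Definition is_iso (D1 : M -> Prop) (S1 : M -> M -> Prop)
    (D2 : M -> Prop) (S2 : M -> M -> Prop) (f : M -> M) : Prop :=
  (forall x, D1 x -> D2 (f x)) /\
  (forall x y, D1 x -> D1 y -> f x = f y -> x = y) /\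
  (forall y, D2 y -> exists x, D1 x /\ f x = y) /\
  (forall x y, D1 x -> D1 y -> (S1 x y <-> S2 (f x) (f y))).

Definition isomorphic D1 S1 D2 S2 : Prop := exists f, is_iso D1 S1 D2 S2 f.

Definition coding_pair (N R : M -> Prop) : Prop :=
  C N /\ C R /\
  (forall p, R p -> exists x y, is_pair x y p /\ N x /\ N y) /\
  exists a, N a /\
    (forall z, N z -> exists! n, Rdist (crel R) a z n) /\
    (forall x y z, y <> z -> crel R y x -> crel R z x ->
       ~ isomorphic (fun w => N w /\ below (crel R) y w) (crel R)
                    (fun w => N w /\ below (crel R) z w) (crel R)) /\
    (forall y z n, y <> z -> N y -> N z ->
       Rdist (crel R) a y n -> Rdist (crel R) a z n ->
       forall v, crel R v y -> ~ crel R v z) /\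
    truly_wf (crel R).

Definition iso_in_C (N1 R1 N2 R2 : M -> Prop) : Prop :=
  exists F, C F /\ (forall p, F p -> exists x y, is_pair x y p) /\
    exists f, is_iso N1 (crel R1) N2 (crel R2) f /\
      forall x y, crel F x y <-> (N1 x /\ y = f x).

End MK.

(* Coding trees are rigid: sibling subtrees are never isomorphic, so an isomorphism between two
   subtrees is unique and sends children to children.  Hence, by induction along the truly
   well-founded relation R1, every isomorphism h between the subtrees at y and z is coded by a
   class: glue the pair (y, z) to all classes of C coding an isomorphism between the subtrees of
   a child of y and a child of z.  By rigidity these classes are exactly the restrictions of h, and
   the glued class exists by impredicative class comprehension, as "codes an isomorphism of
   subtrees" is expressible by a formula. *)

From Stdlib Require Import Classical ClassicalEpsilon Lia.
From Stdlib Require Import FunctionalExtensionality PropExtensionality.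

Lemma truly_wf_ind {M : Type} {Q : M -> M -> Prop} (P : M -> Prop) :
  truly_wf M Q -> (forall y, (forall c, Q c y -> P c) -> P y) -> forall y, P y.
Proof.
  intros Hwf Hstep y. apply NNPP. intros Hy.
  destruct (Hwf (fun t => ~ P t) (ex_intro _ y Hy)) as [x [Hx Hmin]].
  apply Hx, Hstep. intros c Hc. apply NNPP. intros Hnc. exact (Hmin c Hnc Hc).
Qed.

Section Isomorphisms.
Context {M : Type}.
Implicit Types (D : M -> Prop) (Q : M -> M -> Prop).

Lemma iso_ext D1 Q1 D2 Q2 D1' D2' f :
  (forall x, D1 x <-> D1' x) -> (forall x, D2 x <-> D2' x) ->
  is_iso M D1 Q1 D2 Q2 f -> is_iso M D1' Q1 D2' Q2 f.
Proof.
  intros E1 E2 (Hmap & Hinj & Hsurj & Hrel). refine (conj _ (conj _ (conj _ _))).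
  - intros x Hx. apply E2, Hmap, E1, Hx.
  - intros x y Hx Hy. apply Hinj; apply E1; assumption.
  - intros y Hy. destruct (Hsurj y (proj2 (E2 y) Hy)) as [x [Hx Hfx]].
    exists x. split; [apply E1|]; assumption.
  - intros x y Hx Hy. apply Hrel; apply E1; assumption.
Qed.

Lemma iso_comp D1 Q1 D2 Q2 D3 Q3 f g :
  is_iso M D1 Q1 D2 Q2 f -> is_iso M D2 Q2 D3 Q3 g ->
  is_iso M D1 Q1 D3 Q3 (fun x => g (f x)).
Proof.
  intros (Fmap & Finj & Fsurj & Frel) (Gmap & Ginj & Gsurj & Grel).
  refine (conj _ (conj _ (conj _ _))).
  - auto.
  - intros x y Hx Hy E. apply Finj, Ginj; auto.
  - intros z Hz. destruct (Gsurj z Hz) as [y [Hy <-]].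
    destruct (Fsurj y Hy) as [x [Hx <-]]. eauto.
  - intros x y Hx Hy. rewrite (Frel x y Hx Hy). apply Grel; auto.
Qed.

Lemma iso_inv D1 Q1 D2 Q2 f : is_iso M D1 Q1 D2 Q2 f -> isomorphic M D2 Q2 D1 Q1.
Proof.
  intros (Fmap & Finj & Fsurj & Frel).
  assert (Hpre : forall y, exists x, D2 y -> D1 x /\ f x = y).
  { intros y. destruct (classic (D2 y)) as [Hy|Hy].
    - destruct (Fsurj y Hy) as [x Hx]. eauto.
    - exists y. tauto. }
  destruct (choice _ Hpre) as [g Hg].
  exists g. refine (conj _ (conj _ (conj _ _))).
  - intros y Hy. apply Hg, Hy.
  - intros y y' Hy Hy' E. destruct (Hg y Hy) as [_ <-], (Hg y' Hy') as [_ <-].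
    rewrite E. reflexivity.
  - intros x Hx. exists (f x). split; [auto|].
    destruct (Hg (f x) (Fmap x Hx)) as [Hgx Hfgx]. apply Finj; auto.
  - intros y y' Hy Hy'. destruct (Hg y Hy) as [Hgy Ey], (Hg y' Hy') as [Hgy' Ey'].
    rewrite (Frel _ _ Hgy Hgy'), Ey, Ey'. tauto.
Qed.

Lemma isomorphic_images D Q D1 Q1 D2 Q2 f g :
  is_iso M D Q D1 Q1 f -> is_iso M D Q D2 Q2 g -> isomorphic M D1 Q1 D2 Q2.
Proof.
  intros Hf Hg. destruct (iso_inv _ _ _ _ _ Hf) as [k Hk].
  exists (fun x => g (k x)). exact (iso_comp _ _ _ _ _ _ _ _ Hk Hg).
Qed.

End Isomorphisms.

Definition subtree {M : Type} (N : M -> Prop) (Q : M -> M -> Prop) (y : M) : M -> Prop :=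
  fun w => N w /\ below M Q y w.

Record coding_tree {M : Type} (N : M -> Prop) (Q : M -> M -> Prop) (a : M) : Prop := {
  ct_root : N a;
  ct_dist : forall z, N z -> exists! n, Rdist M Q a z n;
  ct_siblings : forall x y z, y <> z -> Q y x -> Q z x ->
    ~ isomorphic M (subtree N Q y) Q (subtree N Q z) Q;
  ct_levels : forall y z n, y <> z -> N y -> N z -> Rdist M Q a y n -> Rdist M Q a z n ->
    forall v, Q v y -> ~ Q v z;
  ct_edges : forall u v, Q u v -> N u /\ N v }.

Arguments ct_root {M N Q a}.
Arguments ct_dist {M N Q a}.
Arguments ct_siblings {M N Q a}.
Arguments ct_levels {M N Q a}.
Arguments ct_edges {M N Q a}.

(* A first-order substitute for [subtree N Q x], whose definition through [below] is not
   expressible by a formula of class theory. *)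
Definition rooted_downset {M : Type} (N : M -> Prop) (Q : M -> M -> Prop) (D : M -> Prop) (x : M)
  : Prop :=
  (forall w, D w -> N w) /\ D x /\ (forall u v, Q u v -> D v -> D u) /\
  (forall u, D u -> u <> x -> exists v, D v /\ Q u v).

Section Below.
Context {M : Type} {Q : M -> M -> Prop}.

Lemma below_trans x y w : below M Q x y -> below M Q y w -> below M Q x w.
Proof. intros Hxy Hyw. induction Hyw; [assumption | econstructor; eauto]. Qed.

Lemma below_root_of_Rdist a z n : Rdist M Q a z n -> below M Q a z.
Proof. intros H. induction H; econstructor; eauto. Qed.

Lemma Rdist_below a x w n : Rdist M Q a x n -> below M Q x w -> exists k, Rdist M Q a w (k + n).
Proof.
  intros Hx Hb. induction Hb.
  - exists 0. exact Hx.
  - destruct IHHb as [k Hk]. exists (S k). econstructor; eauto.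
Qed.

Lemma below_child y u : below M Q y u -> u <> y -> exists c, Q c y /\ below M Q c u.
Proof.
  intros Hb. induction Hb as [|w v Hwv Hb IH]; intros Hne; [contradiction|].
  destruct (classic (v = y)) as [->|Hvy].
  - exists w. split; [assumption | constructor].
  - destruct (IH Hvy) as [c [Hcy Hcv]]. exists c. split; [|econstructor]; eauto.
Qed.

End Below.

Section CodingTree.
Context {M : Type} {N : M -> Prop} {Q : M -> M -> Prop} {a : M} (T : coding_tree N Q a).

Lemma dist_exists z : N z -> exists n, Rdist M Q a z n.
Proof. intros Hz. destruct (ct_dist T z Hz) as [n [Hn _]]. eauto. Qed.

Lemma dist_unique z n m : N z -> Rdist M Q a z n -> Rdist M Q a z m -> n = m.
Proof.
  intros Hz Hn Hm. destruct (ct_dist T z Hz) as [k [_ Hk]].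
  rewrite <- (Hk n Hn), <- (Hk m Hm). reflexivity.
Qed.

Lemma parent_not_below u v : Q u v -> below M Q u v -> False.
Proof.
  intros Huv Hb. destruct (ct_edges T u v Huv) as [Hu _].
  destruct (dist_exists u Hu) as [n Hn].
  destruct (Rdist_below _ _ _ _ Hn Hb) as [k Hk].
  assert (Rdist M Q a u (S (k + n))) by (econstructor; eauto).
  pose proof (dist_unique u _ _ Hu Hn H). lia.
Qed.

Lemma parent_unique u v v' : Q u v -> Q u v' -> v = v'.
Proof.
  intros Hv Hv'. apply NNPP; intros Hne.
  destruct (ct_edges T u v Hv) as [Hu HNv].
  destruct (ct_edges T u v' Hv') as [_ HNv'].
  destruct (dist_exists v HNv) as [m Hm], (dist_exists v' HNv') as [m' Hm'].
  assert (Hmm : S m = S m')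
    by exact (dist_unique u _ _ Hu (RdistS _ _ _ _ _ _ Hv Hm) (RdistS _ _ _ _ _ _ Hv' Hm')).
  injection Hmm as <-.
  exact (ct_levels T v v' m Hne HNv HNv' Hm Hm' u Hv Hv').
Qed.

Lemma siblings_eq_of_isomorphic x y z :
  Q y x -> Q z x -> isomorphic M (subtree N Q y) Q (subtree N Q z) Q -> y = z.
Proof.
  intros Hy Hz Hiso. apply NNPP; intros Hne. exact (ct_siblings T x y z Hne Hy Hz Hiso).
Qed.

Lemma subtree_root x : N x <-> subtree N Q a x.
Proof.
  split; [|intros [Hx _]; exact Hx]. intros Hx. split; [exact Hx|].
  destruct (dist_exists x Hx) as [n Hn]. exact (below_root_of_Rdist _ _ _ Hn).
Qed.

Lemma rooted_downset_of_subtree D x :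
  N x -> (forall w, D w <-> subtree N Q x w) -> rooted_downset N Q D x.
Proof.
  intros Hx E. refine (conj _ (conj _ (conj _ _))).
  - intros w Hw. apply E, Hw.
  - apply E. split; [exact Hx | constructor].
  - intros u v Huv Hv. apply E in Hv. destruct Hv as [_ Hb]. apply E.
    split; [exact (proj1 (ct_edges T u v Huv)) | econstructor; eauto].
  - intros u Hu Hne. apply E in Hu. destruct Hu as [_ Hb].
    destruct Hb as [|u v Huv Hb]; [contradiction|].
    exists v. split; [apply E; split|]; auto. exact (proj2 (ct_edges T u v Huv)).
Qed.

(* Induct on the distance of [w] from the root: an element of [D] other than [x] has its
   parent in [D], and that parent is unique; the root itself can lie in [D] only as [x]. *)
Lemma subtree_of_rooted_downset D x :
  rooted_downset N Q D x -> forall w, D w <-> subtree N Q x w.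
Proof.
  intros (Hdom & Hx & Hdown & Hparent) w. split.
  - intros Hw. split; [auto|]. destruct (dist_exists w (Hdom w Hw)) as [n Hn].
    revert Hw. induction Hn as [|u v n Huv Hv IH]; intros Hu.
    + destruct (classic (a = x)) as [<-|Hne]; [constructor|].
      destruct (Hparent a Hu Hne) as [v [Hv Hav]]. exfalso.
      destruct (dist_exists v (Hdom v Hv)) as [m Hm].
      pose proof (dist_unique a 0 (S m) (Hdom a Hu) (Rdist0 _ _ _) (RdistS _ _ _ _ _ _ Hav Hm)).
      discriminate.
    + destruct (classic (u = x)) as [->|Hne]; [constructor|].
      destruct (Hparent u Hu Hne) as [v' [Hv' Huv']].
      rewrite (parent_unique u v v' Huv Huv') in *. econstructor; eauto.
  - intros [_ Hb]. induction Hb; [assumption|]. eauto.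
Qed.

End CodingTree.

Section TwoCodingTrees.
Context {M : Type} {N1 N2 : M -> Prop} {Q1 Q2 : M -> M -> Prop} {a1 a2 : M}
  (T1 : coding_tree N1 Q1 a1) (T2 : coding_tree N2 Q2 a2).

Lemma subtree_iso_root y z h :
  N1 y -> N2 z -> is_iso M (subtree N1 Q1 y) Q1 (subtree N2 Q2 z) Q2 h -> h y = z.
Proof.
  intros Hy Hz (Hmap & _ & Hsurj & Hrel).
  destruct (Hsurj z (conj Hz (below0 _ _ _))) as [x [[Hx Hb] <-]].
  destruct Hb as [|x v Hxv Hb]; [reflexivity|exfalso].
  assert (Dv : subtree N1 Q1 y v) by (split; [exact (proj2 (ct_edges T1 x v Hxv)) | exact Hb]).
  apply (parent_not_below T2 (h x) (h v)).
  - apply (Hrel x v); [split; [exact Hx | econstructor; eauto] | exact Dv | exact Hxv].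
  - exact (proj2 (Hmap v Dv)).
Qed.

Lemma subtree_iso_restrict y z h u :
  is_iso M (subtree N1 Q1 y) Q1 (subtree N2 Q2 z) Q2 h -> N1 u -> below M Q1 y u ->
  is_iso M (subtree N1 Q1 u) Q1 (subtree N2 Q2 (h u)) Q2 h.
Proof.
  intros (Hmap & Hinj & Hsurj & Hrel) Hu Hyu.
  assert (Inc : forall w, subtree N1 Q1 u w -> subtree N1 Q1 y w).
  { intros w [Hw Hb]. split; [exact Hw | exact (below_trans _ _ _ Hyu Hb)]. }
  refine (conj _ (conj _ (conj _ _))).
  - intros x Hx. split; [exact (proj1 (Hmap x (Inc x Hx)))|].
    destruct Hx as [Hx Hb]. induction Hb as [|w v Hwv Hb IH]; [constructor|].
    destruct (ct_edges T1 w v Hwv) as [_ Hv].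
    econstructor; [|exact (IH Hv)].
    apply (Hrel w v); [| apply Inc; split; auto | exact Hwv].
    apply Inc. split; [|econstructor]; eauto.
  - intros x x' Hx Hx'. apply Hinj; apply Inc; assumption.
  - intros v [Hv Hb]. induction Hb as [|w v Hwv Hb IH].
    + exists u. split; [split; [exact Hu | constructor] | reflexivity].
    + destruct (ct_edges T2 w v Hwv) as [Hw HNv].
      destruct (IH HNv) as [x1 [Hx1 <-]].
      assert (D2w : subtree N2 Q2 z w).
      { split; [exact Hw|]. apply (below_trans _ (h u)); [exact (proj2 (Hmap u (conj Hu Hyu)))|].
        econstructor; eauto. }
      destruct (Hsurj w D2w) as [x [Dx <-]].
      exists x. split; [|reflexivity]. split; [exact (proj1 Dx)|].
      apply (Hrel x x1 Dx (Inc x1 Hx1)) in Hwv. econstructor; [exact Hwv | exact (proj2 Hx1)].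
  - intros x x' Hx Hx'. apply Hrel; apply Inc; assumption.
Qed.

(* Rigidity: since siblings of [T2] have non-isomorphic subtrees, two isomorphisms must send
   each child of a vertex to the same child. *)
Lemma subtree_iso_unique c w g1 g2 :
  N1 c -> N2 w ->
  is_iso M (subtree N1 Q1 c) Q1 (subtree N2 Q2 w) Q2 g1 ->
  is_iso M (subtree N1 Q1 c) Q1 (subtree N2 Q2 w) Q2 g2 ->
  forall u, subtree N1 Q1 c u -> g1 u = g2 u.
Proof.
  intros Hc Hw I1 I2 u [Hu Hb].
  pose proof I1 as (_ & _ & _ & Rel1). pose proof I2 as (_ & _ & _ & Rel2).
  induction Hb as [|u v Huv Hb IH].
  - rewrite (subtree_iso_root c w g1), (subtree_iso_root c w g2); auto.
  - destruct (ct_edges T1 u v Huv) as [_ Hv].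
    assert (Du : subtree N1 Q1 c u) by (split; [|econstructor]; eauto).
    assert (Dv : subtree N1 Q1 c v) by (split; auto).
    pose proof (proj1 (Rel1 u v Du Dv) Huv) as E1.
    pose proof (proj1 (Rel2 u v Du Dv) Huv) as E2.
    rewrite (IH Hv) in E1.
    apply (siblings_eq_of_isomorphic T2 (g2 v)); [exact E1 | exact E2|].
    exact (isomorphic_images _ _ _ _ _ _ _ _
      (subtree_iso_restrict c w g1 u I1 Hu (proj2 Du))
      (subtree_iso_restrict c w g2 u I2 Hu (proj2 Du))).
Qed.

End TwoCodingTrees.

Section KuratowskiPairs.
Context {M : Type} {mem : M -> M -> Prop}.
Hypothesis pairing : forall u v, exists d, forall t, mem t d <-> t = u \/ t = v.
Hypothesis extensionality : forall x y, (forall z, mem z x <-> mem z y) -> x = y.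

Lemma is_pair_inj x y x' y' p :
  is_pair M mem x y p -> is_pair M mem x' y' p -> x = x' /\ y = y'.
Proof.
  intros H1 H2.
  destruct (pairing x x) as [s Hs].
  assert (Hsp : mem s p) by (apply H1; left; intros t; rewrite Hs; tauto).
  assert (x = x') as <-.
  { apply H2 in Hsp. destruct Hsp as [K|K]; specialize (K x'); rewrite Hs in K; symmetry; tauto. }
  split; [reflexivity|].
  destruct (pairing x y) as [t Ht], (pairing x y') as [t' Ht'].
  assert (Htp : mem t p) by (apply H1; right; intros q; rewrite Ht; tauto).
  assert (Htp' : mem t' p) by (apply H2; right; intros q; rewrite Ht'; tauto).
  apply H2 in Htp. apply H1 in Htp'.
  specialize (Ht y). specialize (Ht' y').
  destruct Htp as [K|K], Htp' as [K'|K']; specialize (K y); specialize (K' y');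
    rewrite Ht in K; rewrite Ht' in K'; intuition congruence.
Qed.

Lemma is_pair_exists x y : exists p, is_pair M mem x y p.
Proof.
  destruct (pairing x x) as [s Hs], (pairing x y) as [e He], (pairing s e) as [p Hp].
  exists p. intros w. rewrite Hp. split.
  - intros [-> | ->]; [left | right]; intros t; [rewrite Hs | rewrite He]; tauto.
  - intros [K|K]; [left | right]; apply extensionality; intros t; rewrite K;
      [rewrite Hs | rewrite He]; tauto.
Qed.

End KuratowskiPairs.

Lemma zfc_pairing {M : Type} (mem : M -> M -> Prop) (C : (M -> Prop) -> Prop) :
  zfc_model M mem C -> forall u v, exists d, forall t, mem t d <-> t = u \/ t = v.
Proof.
  intros (_ & _ & Hpair & _ & _ & _ & Hsep & _) u v.
  destruct (Hpair u v) as [c [Hu Hv]].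
  destruct (Hsep (FNot (FAnd (FNot (FEq 0 1)) (FNot (FEq 0 2)))) (scons u (scons v (fun _ => u)))
     (fun _ _ => True) eq_refl c) as [b Hb].
  exists b. intros t. rewrite Hb. simpl. split.
  - tauto.
  - intros [-> | ->]; tauto.
Qed.

Lemma coding_tree_of_coding_pair {M : Type} (mem : M -> M -> Prop) (C : (M -> Prop) -> Prop) N R :
  (forall u v, exists d, forall t, mem t d <-> t = u \/ t = v) ->
  coding_pair M mem C N R -> exists a, coding_tree N (crel M mem R) a.
Proof.
  intros Hpairing (_ & _ & Hpairs & a & Ha & Hdist & Hsib & Hlev & _).
  exists a. split; auto.
  intros u v [p [Hp HR]]. destruct (Hpairs p HR) as [x [y [Hxy [Hx Hy]]]].
  destruct (is_pair_inj Hpairing _ _ _ _ _ Hp Hxy) as [-> ->]. auto.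
Qed.

Definition definable {M : Type} (mem : M -> M -> Prop) (C : (M -> Prop) -> Prop)
  (P : (nat -> M) -> (nat -> M -> Prop) -> Prop) : Prop :=
  exists p, forall es ec, P es ec <-> sat M mem C es ec p.

Section Definability.
Context {M : Type} {mem : M -> M -> Prop} {C : (M -> Prop) -> Prop}.
Local Notation definable := (definable mem C).

Lemma def_mem i j : definable (fun es ec => mem (es i) (es j)).
Proof. exists (FMem i j). reflexivity. Qed.

Lemma def_eq i j : definable (fun es ec => es i = es j).
Proof. exists (FEq i j). reflexivity. Qed.

Lemma def_in i j : definable (fun es ec => ec j (es i)).
Proof. exists (FIn i j). reflexivity. Qed.

Lemma def_not {P} : definable P -> definable (fun es ec => ~ P es ec).
Proof. intros [p Hp]. exists (FNot p). intros es ec. simpl. rewrite Hp. reflexivity. Qed.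

Lemma def_and {P Q} : definable P -> definable Q -> definable (fun es ec => P es ec /\ Q es ec).
Proof.
  intros [p Hp] [q Hq]. exists (FAnd p q). intros es ec. simpl. rewrite Hp, Hq. reflexivity.
Qed.

Lemma def_or {P Q} : definable P -> definable Q -> definable (fun es ec => P es ec \/ Q es ec).
Proof.
  intros [p Hp] [q Hq]. exists (FNot (FAnd (FNot p) (FNot q))). intros es ec. simpl.
  rewrite Hp, Hq. tauto.
Qed.

Lemma def_imp {P Q} : definable P -> definable Q -> definable (fun es ec => P es ec -> Q es ec).
Proof.
  intros [p Hp] [q Hq]. exists (FNot (FAnd p (FNot q))). intros es ec. simpl.
  rewrite Hp, Hq. tauto.
Qed.

Lemma def_iff {P Q} : definable P -> definable Q -> definable (fun es ec => P es ec <-> Q es ec).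
Proof.
  intros [p Hp] [q Hq]. exists (FAnd (FNot (FAnd p (FNot q))) (FNot (FAnd q (FNot p)))).
  intros es ec. simpl. rewrite Hp, Hq. tauto.
Qed.

Lemma def_all {P} : definable P -> definable (fun es ec => forall x, P (scons x es) ec).
Proof.
  intros [p Hp]. exists (FAllS p). intros es ec. simpl.
  split; intros H x; apply Hp, H.
Qed.

Lemma def_ex {P} : definable P -> definable (fun es ec => exists x, P (scons x es) ec).
Proof.
  intros [p Hp]. exists (FNot (FAllS (FNot p))). intros es ec. simpl. split.
  - intros [x Hx] H. apply (H x), Hp, Hx.
  - intros H. apply NNPP. intros Hno. apply H. intros x Hx. apply Hno. exists x. apply Hp, Hx.
Qed.

Lemma def_exC {P} : definable P -> definable (fun es ec => exists A, C A /\ P es (scons A ec)).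
Proof.
  intros [p Hp]. exists (FNot (FAllC (FNot p))). intros es ec. simpl. split.
  - intros [A [HA Hx]] H. apply (H A HA), Hp, Hx.
  - intros H. apply NNPP. intros Hno. apply H. intros A HA Hx. apply Hno.
    exists A. split; [exact HA | apply Hp, Hx].
Qed.

Lemma def_pair i j k : definable (fun es ec => is_pair M mem (es i) (es j) (es k)).
Proof.
  exact (def_all (def_iff (def_mem 0 (S k))
    (def_or (def_all (def_iff (def_mem 0 1) (def_eq 0 (S (S i)))))
      (def_all (def_iff (def_mem 0 1) (def_or (def_eq 0 (S (S i))) (def_eq 0 (S (S j))))))))).
Qed.

Lemma def_crel i j k : definable (fun es ec => crel M mem (ec k) (es i) (es j)).
Proof. exact (def_ex (def_and (def_pair (S i) (S j) 0) (def_in 0 k))). Qed.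

Lemma def_rooted_downset (D : (nat -> M -> Prop) -> M -> Prop) n r x :
  (forall i, definable (fun es ec => D ec (es i))) ->
  definable (fun es ec => rooted_downset (ec n) (crel M mem (ec r)) (D ec) (es x)).
Proof.
  intros hD.
  exact (def_and (def_all (def_imp (hD 0) (def_in 0 n)))
    (def_and (hD x)
    (def_and (def_all (def_all (def_imp (def_crel 1 0 r) (def_imp (hD 0) (hD 1)))))
      (def_all (def_imp (hD 0) (def_imp (def_not (def_eq 0 (S x)))
        (def_ex (def_and (hD 0) (def_crel 1 0 r))))))))).
Qed.

Hypothesis comprehension :
  forall p es ec, (forall i, C (ec i)) -> C (fun x => sat M mem C (scons x es) ec p).

Lemma class_of_definable P : definable P ->
  forall es ec, (forall i, C (ec i)) -> C (fun x => P (scons x es) ec).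
Proof.
  intros [p Hp] es ec Hec.
  replace (fun x => P (scons x es) ec) with (fun x => sat M mem C (scons x es) ec p).
  - exact (comprehension p es ec Hec).
  - apply functional_extensionality. intros x. apply propositional_extensionality.
    symmetry. apply Hp.
Qed.

End Definability.

Definition codes_subtree_iso {M : Type} (mem : M -> M -> Prop) (N1 R1 N2 R2 H : M -> Prop) (x z : M)
  : Prop :=
  (forall p, H p -> exists u v, is_pair M mem u v p) /\
  (forall u v v', crel M mem H u v -> crel M mem H u v' -> v = v') /\
  (forall u u' v, crel M mem H u v -> crel M mem H u' v -> u = u') /\
  (forall u v u' v', crel M mem H u v -> crel M mem H u' v' ->
     (crel M mem R1 u u' <-> crel M mem R2 v v')) /\
  crel M mem H x z /\
  rooted_downset N1 (crel M mem R1) (fun u => exists v, crel M mem H u v) x /\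
  rooted_downset N2 (crel M mem R2) (fun v => exists u, crel M mem H u v) z.

Lemma def_codes_subtree_iso {M : Type} {mem : M -> M -> Prop} {C : (M -> Prop) -> Prop}
  n1 r1 n2 r2 h x z :
  definable mem C
    (fun es ec => codes_subtree_iso mem (ec n1) (ec r1) (ec n2) (ec r2) (ec h) (es x) (es z)).
Proof.
  refine (def_and _ (def_and _ (def_and _ (def_and _ (def_and _ (def_and _ _)))))).
  - exact (def_all (def_imp (def_in 0 h) (def_ex (def_ex (def_pair 1 0 2))))).
  - exact (def_all (def_all (def_all
      (def_imp (def_crel 2 1 h) (def_imp (def_crel 2 0 h) (def_eq 1 0)))))).
  - exact (def_all (def_all (def_all
      (def_imp (def_crel 2 0 h) (def_imp (def_crel 1 0 h) (def_eq 2 1)))))).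
  - exact (def_all (def_all (def_all (def_all
      (def_imp (def_crel 3 2 h) (def_imp (def_crel 1 0 h)
        (def_iff (def_crel 3 1 r1) (def_crel 2 0 r2)))))))).
  - exact (def_crel x z h).
  - exact (def_rooted_downset (fun ec u => exists v, crel M mem (ec h) u v) n1 r1 x
      (fun i => def_ex (def_crel (S i) 0 h))).
  - exact (def_rooted_downset (fun ec v => exists u, crel M mem (ec h) u v) n2 r2 z
      (fun i => def_ex (def_crel 0 (S i) h))).
Qed.

Section CodedSubtreeIsomorphisms.
Context {M : Type} {mem : M -> M -> Prop} {N1 R1 N2 R2 : M -> Prop} {a1 a2 : M}
  (T1 : coding_tree N1 (crel M mem R1) a1) (T2 : coding_tree N2 (crel M mem R2) a2).
Local Notation rel := (crel M mem).
Local Notation sub1 := (subtree N1 (rel R1)).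
Local Notation sub2 := (subtree N2 (rel R2)).
Local Notation codes := (codes_subtree_iso mem N1 R1 N2 R2).

Lemma codes_subtree_iso_graph H x z : codes H x z ->
  exists g, is_iso M (sub1 x) (rel R1) (sub2 z) (rel R2) g /\
    forall u v, rel H u v <-> sub1 x u /\ v = g u.
Proof.
  intros (_ & Hfun & Hinj & Hrel & _ & Hdom & Hran).
  pose proof (subtree_of_rooted_downset T1 _ _ Hdom) as Edom.
  pose proof (subtree_of_rooted_downset T2 _ _ Hran) as Eran.
  assert (Hsel : forall u, exists v, (exists v', rel H u v') -> rel H u v).
  { intros u. destruct (classic (exists v', rel H u v')) as [[v Hv]|Hno]; [eauto|].
    exists u. tauto. }
  destruct (choice _ Hsel) as [g Hg].
  assert (Hgraph : forall u v, rel H u v <-> sub1 x u /\ v = g u).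
  { intros u v. split.
    - intros Huv. assert (Hu : sub1 x u) by (apply Edom; eauto).
      split; [exact Hu | apply (Hfun u); [exact Huv | apply Hg, Edom, Hu]].
    - intros [Hu ->]. apply Hg, Edom, Hu. }
  exists g. split; [|exact Hgraph].
  refine (conj _ (conj _ (conj _ _))).
  - intros u Hu. apply Eran. exists u. apply Hgraph. auto.
  - intros u u' Hu Hu' E. apply (Hinj u u' (g u)); apply Hgraph; auto.
  - intros v Hv. apply Eran in Hv. destruct Hv as [u Huv].
    apply Hgraph in Huv. destruct Huv as [Hu ->]. eauto.
  - intros u u' Hu Hu'. apply Hrel; apply Hgraph; auto.
Qed.

Lemma codes_subtree_iso_of_graph H x z g :
  (forall p, H p -> exists u v, is_pair M mem u v p) -> N1 x -> N2 z ->
  is_iso M (sub1 x) (rel R1) (sub2 z) (rel R2) g ->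
  (forall u v, rel H u v <-> sub1 x u /\ v = g u) -> codes H x z.
Proof.
  intros Hpairs Hx Hz Hg Hgraph.
  pose proof Hg as (Hmap & Hinj & Hsurj & Hrel).
  refine (conj Hpairs (conj _ (conj _ (conj _ (conj _ (conj _ _)))))).
  - intros u v v' Hv Hv'. apply Hgraph in Hv, Hv'. destruct Hv as [_ ->], Hv' as [_ ->].
    reflexivity.
  - intros u u' v Hu Hu'. apply Hgraph in Hu, Hu'. destruct Hu as [Hu ->], Hu' as [Hu' E].
    apply Hinj; auto.
  - intros u v u' v' Huv Hu'v'. apply Hgraph in Huv, Hu'v'.
    destruct Huv as [Hu ->], Hu'v' as [Hu' ->]. apply Hrel; auto.
  - apply Hgraph. split; [split; [exact Hx | constructor] |].
    symmetry. exact (subtree_iso_root T1 T2 x z g Hx Hz Hg).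
  - apply (rooted_downset_of_subtree T1 _ x Hx). intros u. split.
    + intros [v Huv]. apply Hgraph in Huv. apply Huv.
    + intros Hu. exists (g u). apply Hgraph. auto.
  - apply (rooted_downset_of_subtree T2 _ z Hz). intros v. split.
    + intros [u Huv]. apply Hgraph in Huv. destruct Huv as [Hu ->]. auto.
    + intros Hv. destruct (Hsurj v Hv) as [u [Hu <-]]. exists u. apply Hgraph. auto.
Qed.

End CodedSubtreeIsomorphisms.

Definition glued_graph {M : Type} (mem : M -> M -> Prop) (C : (M -> Prop) -> Prop)
  (N1 R1 N2 R2 : M -> Prop) (y z : M) : M -> Prop := fun p =>
  is_pair M mem y z p \/
  exists c w, crel M mem R1 c y /\ crel M mem R2 w z /\
    exists H, C H /\ codes_subtree_iso mem N1 R1 N2 R2 H c w /\ H p.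

Lemma def_glued_graph {M : Type} {mem : M -> M -> Prop} {C : (M -> Prop) -> Prop} :
  definable mem C (fun es ec => glued_graph mem C (ec 0) (ec 1) (ec 2) (ec 3) (es 1) (es 2) (es 0)).
Proof.
  exact (def_or (def_pair 1 2 0) (def_ex (def_ex (def_and (def_crel 1 3 1) (def_and (def_crel 0 4 3)
    (def_exC (def_and (def_codes_subtree_iso 1 2 3 4 0 1 0) (def_in 2 0)))))))).
Qed.

Section Gluing.
Context {M : Type} {mem : M -> M -> Prop} {C : (M -> Prop) -> Prop}.
Hypothesis comprehension :
  forall p es ec, (forall i, C (ec i)) -> C (fun x => sat M mem C (scons x es) ec p).
Hypothesis pairing : forall u v, exists d, forall t, mem t d <-> t = u \/ t = v.
Hypothesis extensionality : forall x y, (forall z, mem z x <-> mem z y) -> x = y.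
Context {N1 R1 N2 R2 : M -> Prop} (CN1 : C N1) (CR1 : C R1) (CN2 : C N2) (CR2 : C R2)
  {a1 a2 : M} (T1 : coding_tree N1 (crel M mem R1) a1) (T2 : coding_tree N2 (crel M mem R2) a2).
Local Notation rel := (crel M mem).
Local Notation sub1 := (subtree N1 (rel R1)).
Local Notation sub2 := (subtree N2 (rel R2)).
Local Notation codes := (codes_subtree_iso mem N1 R1 N2 R2).
Local Notation glue := (glued_graph mem C N1 R1 N2 R2).

Lemma glued_graph_class y z : C (glue y z).
Proof.
  apply (class_of_definable comprehension _ def_glued_graph (scons y (scons z (fun _ => y)))
    (scons N1 (scons R1 (scons N2 (scons R2 (fun _ => N1)))))).
  intros [|[|[|[|i]]]]; assumption.
Qed.

Lemma glued_graph_pairs y z p : glue y z p -> exists u v, is_pair M mem u v p.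
Proof.
  intros [Hp | (c & w & _ & _ & H & _ & HH & Hp)]; [eauto | exact (proj1 HH p Hp)].
Qed.

Lemma crel_glued_graph y z u v :
  rel (glue y z) u v <->
  (u = y /\ v = z) \/
  exists c w H, rel R1 c y /\ rel R2 w z /\ C H /\ codes H c w /\ rel H u v.
Proof.
  split.
  - intros [p [Hp [Gp | (c & w & Hc & Hw & H & CH & HH & Hph)]]].
    + left. exact (is_pair_inj pairing _ _ _ _ _ Hp Gp).
    + right. exists c, w, H. refine (conj Hc (conj Hw (conj CH (conj HH _)))). exists p. auto.
  - intros [[-> ->] | (c & w & H & Hc & Hw & CH & HH & [p [Hp Hph]])].
    + destruct (is_pair_exists pairing extensionality y z) as [p Hp].
      exists p. split; [exact Hp | left; exact Hp].
    + exists p. split; [exact Hp|]. right.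
      exists c, w. refine (conj Hc (conj Hw _)). exists H. auto.
Qed.

Section Step.
Variables (y z : M) (h : M -> M).
Hypotheses (Hy : N1 y) (Hz : N2 z) (Hh : is_iso M (sub1 y) (rel R1) (sub2 z) (rel R2) h).

Lemma subtree_iso_child c : rel R1 c y ->
  N1 c /\ rel R2 (h c) z /\ is_iso M (sub1 c) (rel R1) (sub2 (h c)) (rel R2) h.
Proof.
  intros Hc. destruct (ct_edges T1 c y Hc) as [HNc _].
  assert (Bc : below M (rel R1) y c) by (econstructor; [exact Hc | constructor]).
  split; [exact HNc | split].
  - rewrite <- (subtree_iso_root T1 T2 y z h Hy Hz Hh).
    apply (proj2 (proj2 (proj2 Hh)) c y); [split; auto | split; [auto | constructor] | exact Hc].
  - exact (subtree_iso_restrict T1 T2 y z h c Hh HNc Bc).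
Qed.

(* Any coded isomorphism between subtrees of children of [y] and [z] agrees with [h]: the
   children must correspond under [h] because sibling subtrees are non-isomorphic, and then
   rigidity applies. *)
Lemma codes_child_iso_agrees c w H u v : rel R1 c y -> rel R2 w z -> codes H c w ->
  rel H u v <-> sub1 c u /\ v = h u.
Proof.
  intros Hc Hw HH.
  destruct (subtree_iso_child c Hc) as (HNc & Hhc & Ihc).
  destruct (codes_subtree_iso_graph T1 T2 H c w HH) as [g [Ig Hgraph]].
  assert (w = h c) as ->.
  { apply (siblings_eq_of_isomorphic T2 z w (h c) Hw Hhc).
    exact (isomorphic_images _ _ _ _ _ _ _ _ Ig Ihc). }
  pose proof (subtree_iso_unique T1 T2 c (h c) g h HNc (proj1 (ct_edges T2 _ _ Hhc)) Ig Ihc)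
    as Egh.
  rewrite Hgraph. split; intros [Hu ->]; (split; [exact Hu|]); [|symmetry]; exact (Egh u Hu).
Qed.

Lemma glued_graph_is_graph :
  (forall c, rel R1 c y -> forall w g, N2 w -> is_iso M (sub1 c) (rel R1) (sub2 w) (rel R2) g ->
     exists H, C H /\ codes H c w) ->
  forall u v, rel (glue y z) u v <-> sub1 y u /\ v = h u.
Proof.
  intros IH u v. pose proof (subtree_iso_root T1 T2 y z h Hy Hz Hh) as Hroot.
  rewrite crel_glued_graph. split.
  - intros [[-> ->] | (c & w & H & Hc & Hw & _ & HH & Huv)].
    + split; [split; [exact Hy | constructor] | symmetry; exact Hroot].
    + apply (codes_child_iso_agrees c w H u v Hc Hw HH) in Huv. destruct Huv as [[Hu Hcu] ->].
      split; [split; [exact Hu|] | reflexivity].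
      apply (below_trans _ c); [econstructor; [exact Hc | constructor] | exact Hcu].
  - intros [[Hu Hyu] ->]. destruct (classic (u = y)) as [-> | Hne].
    { left. split; [reflexivity | exact Hroot]. }
    right.
    destruct (below_child _ _ Hyu Hne) as [c [Hc Hcu]].
    destruct (subtree_iso_child c Hc) as (HNc & Hhc & Ihc).
    destruct (IH c Hc (h c) h (proj1 (ct_edges T2 _ _ Hhc)) Ihc) as [H [CH HH]].
    exists c, (h c), H. refine (conj Hc (conj Hhc (conj CH (conj HH _)))).
    apply (codes_child_iso_agrees c (h c) H); auto. split; [split; assumption | reflexivity].
Qed.

End Step.

Lemma coded_subtree_iso : truly_wf M (rel R1) ->
  forall y, N1 y -> forall z h, N2 z -> is_iso M (sub1 y) (rel R1) (sub2 z) (rel R2) h ->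
  exists H, C H /\ codes H y z.
Proof.
  intros Hwf. refine (truly_wf_ind _ Hwf _). intros y IH Hy z h Hz Hh.
  exists (glue y z). split; [exact (glued_graph_class y z)|].
  apply (codes_subtree_iso_of_graph T1 T2 _ y z h (glued_graph_pairs y z) Hy Hz Hh).
  exact (glued_graph_is_graph y z h Hy Hz Hh
    (fun c Hc => IH c Hc (proj1 (ct_edges T1 c y Hc)))).
Qed.

End Gluing.

Theorem lemma9 (M : Type) (mem : M -> M -> Prop) (C : (M -> Prop) -> Prop)
  (HMK : mkstar_model M mem C) (Hbeta : beta_model M mem C)
  (N1 N2 R1 R2 : M -> Prop)
  (HN1 : C N1) (HN2 : C N2) (HR1 : C R1) (HR2 : C R2)
  (Hwf1 : truly_wf M (crel M mem R1)) (Hwf2 : truly_wf M (crel M mem R2))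
  (Hcp1 : coding_pair M mem C N1 R1) (Hcp2 : coding_pair M mem C N2 R2)
  (Hiso : isomorphic M N1 (crel M mem R1) N2 (crel M mem R2)) :
  iso_in_C M mem C N1 R1 N2 R2.
Proof.
  destruct HMK as (Hzfc & _ & _ & _ & Hcomp & _).
  pose proof (zfc_pairing mem C Hzfc) as Hpairing.
  pose proof (proj1 (proj2 Hzfc)) as Hext.
  destruct (coding_tree_of_coding_pair mem C N1 R1 Hpairing Hcp1) as [a1 T1].
  destruct (coding_tree_of_coding_pair mem C N2 R2 Hpairing Hcp2) as [a2 T2].
  pose proof (subtree_root T1) as E1. pose proof (subtree_root T2) as E2.
  destruct Hiso as [f Hf]. apply (iso_ext _ _ _ _ _ _ f E1 E2) in Hf.
  destruct (coded_subtree_iso Hcomp Hpairing Hext HN1 HR1 HN2 HR2 T1 T2 Hwf1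
              a1 (ct_root T1) a2 f (ct_root T2) Hf) as [H [CH HH]].
  destruct (codes_subtree_iso_graph T1 T2 H a1 a2 HH) as [g [Hg Hgraph]].
  exists H. split; [exact CH|]. split; [exact (proj1 HH)|].
  exists g. split.
  - exact (iso_ext _ _ _ _ _ _ g (fun x => iff_sym (E1 x)) (fun x => iff_sym (E2 x)) Hg).
  - intros x y. rewrite Hgraph, <- E1. reflexivity.
Qed.
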